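(* Assume $b_1<n^*$ and $b_2<m^*$. Then in every Nash equilibrium $(\sigma^{1*},\sigma^{2*})$ of $\Gamma(b_1,b_2)$, the node basis of $\sigma^{1*}$ is a set cover. Furthermore, $\Gamma(b_1,b_2)$ has no Nash equilibrium in which $\sigma^{1*}$ or $\sigma^{2*}$ is a point mass (both players must randomize).
   Context: Detection model: finite nonempty sets $\mathcal V$, $\mathcal E$, monitoring sets $\mathcal C_i\subseteq\mathcal E$ ($i\in\mathcal V$) with every $e\in\mathcal E$ in some $\mathcal C_i$; $\mathcal C_S=\bigcup_{i\in S}\mathcal C_i$; $F(S,T)=|\mathcal C_S\cap T|$. Set cover: $S\subseteq\mathcal V$ with $\mathcal C_S=\mathcal E$; $n^*$ = minimum size of a set cover. Set packing: $T\subseteq\mathcal E$ with $|\mathcal C_i\cap T|\le1$ for all $i$; $m^*$ = maximum size of a set packing. Game $\Gamma(b_1,b_2)$ ($b_1,b_2$ positive integers): $\mathcal A_1=\{S\subseteq\mathcal V:|S|\le b_1\}$, $\mathcal A_2=\{T\subseteq\mathcal E:|T|\le b_2\}$; mixed strategies $\sigma^1\in\Delta(\mathcal A_1)$, $\sigma^2\in\Delta(\mathcal A_2)$ (independent); payoffs $U_1=\mathbb E[F(S,T)]$, $U_2=\mathbb E[|T|]-\mathbb E[F(S,T)]$; Nash equilibrium in mixed strategies as usual. The node basis of $\sigma^1$ is $\{i\in\mathcal V:\mathbb P_{S\sim\sigma^1}(i\in S)>0\}$. *)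

From HB Require Import structures.
From mathcomp Require Import all_boot all_order all_algebra.
Set Implicit Arguments. Unset Strict Implicit. Unset Printing Implicit Defensive.
Import Order.TTheory GRing.Theory Num.Theory.

Section Detection.
Variables (V E : finType) (C : V -> {set E}).

Definition CS (S : {set V}) : {set E} := \bigcup_(i in S) C i.
Definition Fdet (S : {set V}) (T : {set E}) : nat := #|CS S :&: T|.

Definition is_set_cover (S : {set V}) : bool := CS S == [set: E].
Definition is_set_packing (T : {set E}) : bool := [forall i, #|C i :&: T| <= 1].

(* n* : minimum size of a set cover (default #|V| is irrelevant when
   some cover exists, e.g. [set: V] under the covering assumption) *)
Definition n_star : nat := \big[minn/#|V|]_(S : {set V} | is_set_cover S) #|S|.
Definition m_star : nat := \max_(T : {set E} | is_set_packing T) #|T|.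

Local Open Scope ring_scope.
Variable R : realFieldType.

(* a mixed strategy over the action set {A : |A| <= b} *)
Definition mixed (T : finType) (b : nat) (sigma : {set T} -> R) : Prop :=
  [/\ forall A : {set T}, 0 <= sigma A,
      \sum_(A : {set T}) sigma A = 1 &
      forall A : {set T}, (b < #|A|)%N -> sigma A = 0].

Definition U1 (s1 : {set V} -> R) (s2 : {set E} -> R) : R :=
  \sum_(S : {set V}) \sum_(T : {set E}) s1 S * s2 T * (Fdet S T)%:R.

Definition U2 (s1 : {set V} -> R) (s2 : {set E} -> R) : R :=
  \sum_(S : {set V}) \sum_(T : {set E})
     s1 S * s2 T * ((#|T|)%:R - (Fdet S T)%:R).

Definition nash (b1 b2 : nat) (s1 : {set V} -> R) (s2 : {set E} -> R) : Prop :=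
  [/\ mixed b1 s1, mixed b2 s2,
      forall t1, mixed b1 t1 -> U1 t1 s2 <= U1 s1 s2 &
      forall t2, mixed b2 t2 -> U2 s1 t2 <= U2 s1 s2].

Definition node_basis (s1 : {set V} -> R) : {set V} :=
  [set i | 0 < \sum_(S : {set V} | i \in S) s1 S].

Definition point_mass (T : finType) (sigma : {set T} -> R) : Prop :=
  exists A, sigma A = 1.

End Detection.

From HB Require Import structures.
From mathcomp Require Import all_boot all_order all_algebra.
From mathcomp Require Import zify ring lra.
Set Implicit Arguments. Unset Strict Implicit. Unset Printing Implicit Defensive.
Import Order.TTheory GRing.Theory Num.Theory.

(* Write u1, u2 for the equilibrium payoffs; u1 + u2 is the expected size of the
   attack, hence at most b2.  Pure deviations give u1 < b1 (using a packing of size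
   b2 + 1) and u2 > 0 (no defended set is a cover, as b1 < n_star).  An element
   escaping the node basis, or a pure strategy of either player, allows a deviation
   violating one of these three inequalities. *)

Section CardinalityBounds.
Variables (I X : finType).

Lemma card_bigcup_le (S : {set I}) (D : I -> {set X}) :
  (#|\bigcup_(j in S) D j| <= \sum_(j in S) #|D j|)%N.
Proof.
elim/big_ind2: _ => [|m A n B Am Bn|//]; first by rewrite cards0.
by rewrite (leq_trans (leq_card_setU _ _)) // leq_add.
Qed.

Lemma sum_card_disjoint_le (S : {set I}) (D : I -> {set X}) (B : {set X}) :
  (forall j, j \in S -> D j \subset B) ->
  (forall j k e, j \in S -> k \in S -> e \in D j -> e \in D k -> j = k) ->
  (\sum_(j in S) #|D j| <= #|B|)%N.
Proof.
move=> subB disj; rewrite -sum1_card.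
under eq_bigr do rewrite -sum1_card big_mkcond /=.
rewrite exchange_big /= [leqRHS]big_mkcond /=; apply: leq_sum => e _.
case: (pickP [pred j | (j \in S) && (e \in D j)]) => [j /andP[jS ej]|none].
  rewrite (bigD1 j) //= ej (subsetP (subB j jS)) // big1 // => k /andP[kS kj].
  by case: ifP => // ek; case/eqP: kj; apply: disj ek ej.
by rewrite big1 // => k kS; case: ifP => // ek; move: (none k); rewrite /= kS ek.
Qed.

Lemma exists_subset_card (P : {set X}) n :
  (n <= #|P|)%N -> exists2 Q : {set X}, Q \subset P & #|Q| = n.
Proof.
move=> le_nP; have [k cardP] : exists k, #|P| = (n + k)%N by exists (#|P| - n)%N; lia.
elim: k P cardP {le_nP} => [|k IHk] P cardP; first by exists P; rewrite ?cardP ?addn0.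
have /card_gt0P[x xP] : (0 < #|P|)%N by rewrite cardP; lia.
have [|Q sQP cardQ] := IHk (P :\ x); first by have := cardsD1 x P; rewrite xP cardP; lia.
by exists Q => //; apply: subset_trans sQP (subsetDl _ _).
Qed.

End CardinalityBounds.

Section Coverage.
Variables (V E : finType) (C : V -> {set E}).
Implicit Types (S : {set V}) (T P : {set E}).

Lemma CS_subset S S' : S \subset S' -> CS C S \subset CS C S'.
Proof.
by move=> sSS'; apply/bigcupsP => i iS; apply: (bigcup_max i) (subsetP sSS' i iS) _.
Qed.

Lemma mem_CS i S e : i \in S -> e \in C i -> e \in CS C S.
Proof. by move=> iS ei; apply/bigcupP; exists i. Qed.

Lemma not_set_coverP S : reflect (exists e, e \notin CS C S) (~~ is_set_cover C S).
Proof.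
rewrite /is_set_cover -properT; apply: (iffP idP) => [/properP[_ [e _ eS]]|[e eS]].
  by exists e.
by rewrite properT; apply: contraNneq eS => ->; rewrite inE.
Qed.

Lemma is_set_coverS S S' : S \subset S' -> is_set_cover C S -> is_set_cover C S'.
Proof.
move=> sSS' /eqP coverS; rewrite /is_set_cover eqEsubset subsetT /=.
by rewrite -coverS CS_subset.
Qed.

Lemma Fdet_subset S S' T : S \subset S' -> (Fdet C S T <= Fdet C S' T)%N.
Proof. by move=> sSS'; rewrite subset_leq_card // setSI // CS_subset. Qed.

Lemma Fdet_gain S S' T e :
  CS C S \subset CS C S' -> e \notin CS C S -> e \in CS C S' ->
  (Fdet C S T + (e \in T) <= Fdet C S' T)%N.
Proof.
move=> sub eS eS'; rewrite /Fdet; case: (boolP (e \in T)) => eT; last first.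
  by rewrite addn0 subset_leq_card // setSI.
rewrite addn1; apply: proper_card; apply/properP; split; first exact: setSI.
by exists e; rewrite !inE ?eT ?eS' // (negbTE eS).
Qed.

Lemma sum_Fdet_marginal_le S T :
  (\sum_(j in S) (Fdet C S T - Fdet C (S :\ j) T) <= Fdet C S T)%N.
Proof.
have marginal j : (Fdet C S T - Fdet C (S :\ j) T =
                   #|(CS C S :&: T) :\: CS C (S :\ j)|)%N.
  by rewrite cardsD /Fdet (setIC (CS C S :&: T)) setIA
             (setIidPl (CS_subset (subsetDl S [set j]))).
under eq_bigr do rewrite marginal.
apply: sum_card_disjoint_le => [j _|j k e jS kS]; first exact: subsetDl.
rewrite !inE => /andP[ej /andP[/bigcupP[i iS ei] _]] /andP[ek _].
have only_cover l : i \notin S :\ l -> i = l.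
  by rewrite !inE iS andbT negbK => /eqP.
have -> : j = i by apply/esym/only_cover; apply: contra ej => ?; apply: mem_CS ei.
by apply/only_cover; apply: contra ek => ?; apply: mem_CS ei.
Qed.

Lemma Fdet_packing_le S P : is_set_packing C P -> (Fdet C S P <= #|S|)%N.
Proof.
move=> /forallP packP; rewrite /Fdet /CS.
rewrite (big_morph (fun A => A :&: P) (fun A B => setIUl A B P) (set0I P)).
apply: leq_trans (card_bigcup_le _ _) _.
by rewrite -sum1_card leq_sum.
Qed.

Lemma exists_greedy_cover (T : {set E}) k :
  (forall e, exists i, e \in C i) ->
  exists2 S : {set V}, (#|S| <= k)%N & (minn k #|T| <= Fdet C S T)%N.
Proof.
move=> cover; elim: k => [|k [S Sk SF]]; first by exists set0; rewrite ?cards0 ?min0n.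
have [sTS|/subsetPn[e eT eS]] := boolP (T \subset CS C S).
  exists S; first exact: leqW.
  by rewrite geq_min /Fdet (setIidPr sTS) leqnn orbT.
have [i ei] := cover e.
exists (i |: S); first by rewrite cardsU1; case: (i \in S) => /=; lia.
have := Fdet_gain T (CS_subset (subsetUr [set i] S)) eS (mem_CS (setU11 i S) ei).
rewrite eT; move: SF; rewrite /minn; case: ifP; case: ifP; lia.
Qed.

Lemma n_star_le S : is_set_cover C S -> (n_star C <= #|S|)%N.
Proof.
by move=> coverS; rewrite /n_star -minEnat; apply: (@bigmin_le_cond _ nat _ _ S).
Qed.

Lemma is_set_packingS P P' : P \subset P' -> is_set_packing C P' -> is_set_packing C P.
Proof.
move=> sPP' /forallP packP'; apply/forallP => i.
by apply: leq_trans (packP' i); rewrite subset_leq_card // setIS.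
Qed.

Lemma exists_packing_card n : (n <= m_star C)%N ->
  exists2 P : {set E}, is_set_packing C P & #|P| = n.
Proof.
have pack0 : is_set_packing C set0 by apply/forallP => i; rewrite setI0 cards0.
rewrite /m_star (bigop.bigmax_eq_arg set0 pack0); case: arg_maxnP => //= P packP _ le_n.
have [Q sQP cardQ] := exists_subset_card le_n.
by exists Q => //; apply: is_set_packingS packP.
Qed.

End Coverage.

Section MixedStrategies.
Local Open Scope ring_scope.
Variables (R : realFieldType) (X : finType) (b : nat).
Implicit Types (s t : {set X} -> R) (f : {set X} -> R) (A B : {set X}).

Definition pure A : {set X} -> R := fun B => (B == A)%:R.

Lemma sum_pure A f : \sum_B pure A B * f B = f A.
Proof.
by rewrite (bigD1 A) //= /pure eqxx mul1r big1 ?addr0 // => B /negbTE ->; rewrite mul0r.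
Qed.

Lemma sum_pure1 A : \sum_B pure A B = 1.
Proof. by rewrite -[RHS](sum_pure A (fun=> 1)); apply: eq_bigr => B _; rewrite mulr1. Qed.

Lemma mixed_pure A : (#|A| <= b)%N -> mixed b (pure A).
Proof.
move=> cardA; split=> [B||B ltbB]; [exact: ler0n | exact: sum_pure1 |].
by rewrite /pure; case: eqP => // eqBA; rewrite eqBA ltnNge cardA in ltbB.
Qed.

Lemma mixed_support_card s A : mixed b s -> 0 < s A -> (#|A| <= b)%N.
Proof.
by case=> _ _ s_card sA; rewrite leqNgt; apply: contraTN sA => /s_card ->; rewrite ltxx.
Qed.

Lemma mixed_exists_support s : mixed b s -> exists A, 0 < s A.
Proof.
case=> s_ge0 s_sum1 _; apply/existsP; apply: contraT => /existsPn s_le0.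
suff : \sum_A s A = 0 by rewrite s_sum1 => /eqP; rewrite oner_eq0.
by apply: big1 => A _; apply/eqP; rewrite eq_le s_ge0 andbT leNgt s_le0.
Qed.

Lemma mixed_point_mass s A B : mixed b s -> s A = 1 -> B != A -> s B = 0.
Proof.
case=> s_ge0 s_sum1 _ sA neBA; move: s_sum1.
rewrite (bigD1 A) //= sA => /(congr1 (fun x => x - 1)).
by rewrite addrAC !subrr add0r => /psumr_eq0P; apply.
Qed.

Lemma mixed_sum_le s g c :
  mixed b s -> (forall A, 0 < s A -> g A <= c) -> \sum_A s A * g A <= c.
Proof.
case=> s_ge0 s_sum1 _ le_gc; rewrite -[leRHS]mul1r -s_sum1 big_distrl /=.
apply: ler_sum => A _; have [->|nzA] := eqVneq (s A) 0; first by rewrite !mul0r.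
by rewrite ler_wpM2l // le_gc // lt0r nzA s_ge0.
Qed.

Lemma mixed_sum_ge s g c :
  mixed b s -> (forall A, 0 < s A -> c <= g A) -> c <= \sum_A s A * g A.
Proof.
move=> mixed_s le_cg; rewrite -lerN2 -sumrN.
under eq_bigr do rewrite -mulrN.
by apply: mixed_sum_le => // A /le_cg; rewrite lerN2.
Qed.

Lemma sum_point_mass s g A : mixed b s -> s A = 1 -> \sum_B s B * g B = g A.
Proof.
move=> mixed_s sA; rewrite (bigD1 A) //= sA mul1r big1 ?addr0 // => B neBA.
by rewrite (mixed_point_mass mixed_s sA neBA) mul0r.
Qed.

Variables (f : {set X} -> R) (s : {set X} -> R).
Hypothesis mixed_s : mixed b s.
Hypothesis best_s : forall t, mixed b t -> \sum_A t A * f A <= \sum_A s A * f A.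

Lemma best_response_pure_le A : (#|A| <= b)%N -> f A <= \sum_B s B * f B.
Proof. by move=> cardA; rewrite -(sum_pure A f); apply/best_s/mixed_pure. Qed.

(* Shifting the mass of [A] onto [B] is again a mixed strategy. *)
Lemma best_response_support_max A B :
  0 < s A -> (#|B| <= b)%N -> f B <= f A.
Proof.
have [s_ge0 s_sum1 s_card] := mixed_s.
move=> sA cardB; have [->//|neBA] := eqVneq B A.
pose t D := s D + s A * (pure B D - pure A D).
have cardA := mixed_support_card mixed_s sA.
have mixed_t : mixed b t.
  split=> [D||D ltbD].
  - rewrite /t /pure; have [->|neDA] := eqVneq D A.
      by rewrite eq_sym (negbTE neBA) sub0r mulrN1 subrr.
    by rewrite /= subr0 addr_ge0 ?mulr_ge0 ?ler0n // ltW.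
  - rewrite /t big_split /= s_sum1 -big_distrr /= sumrB.
    by rewrite !sum_pure1 subrr mulr0 addr0.
  - rewrite /t s_card // /pure.
    case: eqP => [eqDB|_]; first by rewrite eqDB ltnNge cardB in ltbD.
    case: eqP => [eqDA|_]; first by rewrite eqDA ltnNge cardA in ltbD.
    by rewrite subrr mulr0 addr0.
have := best_s mixed_t; rewrite /t.
under eq_bigr do rewrite mulrDl mulrBr mulrBl -!mulrA.
rewrite big_split sumrB -!big_distrr /= !sum_pure gerDl.
by rewrite -mulrBr pmulr_rle0 // subr_le0.
Qed.

End MixedStrategies.

Section Payoffs.
Local Open Scope ring_scope.
Variables (R : realFieldType) (V E : finType) (C : V -> {set E}).
Implicit Types (S : {set V}) (T P : {set E}) (e : E).

Definition coverage_value (s2 : {set E} -> R) S : R := \sum_T s2 T * (Fdet C S T)%:R.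
Definition attack_prob (s2 : {set E} -> R) e : R := \sum_T s2 T * (e \in T)%:R.
Definition detection_prob (s1 : {set V} -> R) e : R := \sum_S s1 S * (e \in CS C S)%:R.
Definition attack_value (s1 : {set V} -> R) T : R :=
  #|T|%:R - \sum_(e in T) detection_prob s1 e.

Lemma U1E (t1 : {set V} -> R) (s2 : {set E} -> R) :
  U1 C t1 s2 = \sum_S t1 S * coverage_value s2 S.
Proof.
apply: eq_bigr => S _; rewrite /coverage_value big_distrr.
by apply: eq_bigr => T _; rewrite /= mulrA.
Qed.

Lemma Fdet_natr S T : (Fdet C S T)%:R = \sum_(e in T) (e \in CS C S)%:R :> R.
Proof.
rewrite /Fdet -sum1_card natr_sum big_mkcond [RHS]big_mkcond /=.
by apply: eq_bigr => e _; rewrite inE andbC; case: (e \in T); case: (e \in CS C S).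
Qed.

Lemma sum_detection_prob (s1 : {set V} -> R) T :
  \sum_(e in T) detection_prob s1 e = \sum_S s1 S * (Fdet C S T)%:R.
Proof. by rewrite exchange_big; apply: eq_bigr => S _; rewrite Fdet_natr big_distrr. Qed.

Lemma U2E b (s1 : {set V} -> R) (t2 : {set E} -> R) :
  mixed b s1 -> U2 C s1 t2 = \sum_T t2 T * attack_value s1 T.
Proof.
case=> _ s1_sum1 _; rewrite /U2 exchange_big; apply: eq_bigr => T _.
rewrite /attack_value sum_detection_prob.
rewrite [in RHS](_ : #|T|%:R = \sum_S s1 S * #|T|%:R); last first.
  by rewrite -big_distrl /= s1_sum1 mul1r.
by rewrite -sumrB big_distrr; apply: eq_bigr => S _ /=; ring.
Qed.

Lemma U1_add_U2 b (s1 : {set V} -> R) (s2 : {set E} -> R) :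
  mixed b s1 -> U1 C s1 s2 + U2 C s1 s2 = \sum_T s2 T * #|T|%:R.
Proof.
case=> _ s1_sum1 _; rewrite /U1 /U2 -big_split /=.
under eq_bigr do rewrite -big_split /=.
rewrite exchange_big; apply: eq_bigr => T _.
transitivity (\sum_S s1 S * (s2 T * #|T|%:R)); first by apply: eq_bigr => S _; ring.
by rewrite -big_distrl /= s1_sum1 mul1r.
Qed.

Lemma attack_value_setU1 (s1 : {set V} -> R) T e : e \notin T ->
  attack_value s1 (e |: T) = attack_value s1 T + 1 - detection_prob s1 e.
Proof.
by move=> eT; rewrite /attack_value cardsU1 eT (big_setU1 _ eT) natrD /=; ring.
Qed.

Lemma attack_value_setD1 (s1 : {set V} -> R) T e : e \in T ->
  attack_value s1 (T :\ e) = attack_value s1 T - 1 + detection_prob s1 e.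
Proof.
by move=> eT; rewrite -[in RHS](setD1K eT) attack_value_setU1 ?setD11 //; ring.
Qed.

Lemma coverage_value_gt0 b (s2 : {set E} -> R) S T :
  mixed b s2 -> 0 < s2 T -> (0 < Fdet C S T)%N -> 0 < coverage_value s2 S.
Proof.
case=> s2_ge0 _ _ s2T FT; rewrite /coverage_value (bigD1 T) //= ltr_pwDl //.
  by rewrite mulr_gt0 // ltr0n.
by rewrite sumr_ge0 // => T' _; rewrite mulr_ge0 ?ler0n.
Qed.

Lemma detection_prob_ge0 b (s1 : {set V} -> R) e :
  mixed b s1 -> 0 <= detection_prob s1 e.
Proof. by case=> s1_ge0 _ _; apply: sumr_ge0 => S _; rewrite mulr_ge0 ?ler0n. Qed.

(* Each node watches at most one element of a packing. *)
Lemma sum_detection_prob_packing_le b (s1 : {set V} -> R) P :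
  mixed b s1 -> is_set_packing C P -> \sum_(e in P) detection_prob s1 e <= b%:R.
Proof.
move=> mixed_s1 packP; rewrite sum_detection_prob.
apply: (mixed_sum_le mixed_s1) => S s1S; rewrite ler_nat.
exact: leq_trans (Fdet_packing_le S packP) (mixed_support_card mixed_s1 s1S).
Qed.

Lemma coverage_value_gain b (s2 : {set E} -> R) S S' e :
  mixed b s2 -> CS C S \subset CS C S' -> e \notin CS C S -> e \in CS C S' ->
  coverage_value s2 S + attack_prob s2 e <= coverage_value s2 S'.
Proof.
case=> s2_ge0 _ _ sub eS eS'; rewrite -big_split; apply: ler_sum => T _ /=.
by rewrite -mulrDr ler_wpM2l // -natrD ler_nat Fdet_gain.
Qed.

Lemma sum_coverage_value_marginal_le b (s2 : {set E} -> R) S : mixed b s2 ->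
  \sum_(j in S) (coverage_value s2 S - coverage_value s2 (S :\ j))
    <= coverage_value s2 S.
Proof.
case=> s2_ge0 _ _; under eq_bigr do rewrite -sumrB.
rewrite exchange_big; apply: ler_sum => T _ /=.
rewrite (eq_bigr (fun j => s2 T * (Fdet C S T - Fdet C (S :\ j) T)%:R)); last first.
  by move=> j _; rewrite natrB ?Fdet_subset ?subsetDl // mulrBr.
by rewrite -big_distrr /= ler_wpM2l // -natr_sum ler_nat sum_Fdet_marginal_le.
Qed.

Lemma detection_prob_lt1 b (s1 : {set V} -> R) S e :
  mixed b s1 -> 0 < s1 S -> e \notin CS C S -> detection_prob s1 e < 1.
Proof.
case=> s1_ge0 s1_sum1 _ s1S eS; rewrite -subr_gt0 -{1}s1_sum1 -sumrB.
have term_ge0 S' : 0 <= s1 S' - s1 S' * (e \in CS C S')%:R.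
  by rewrite -[X in X - _]mulr1 -mulrBr mulr_ge0 // subr_ge0 lern1 leq_b1.
rewrite (bigD1 S) //= (negbTE eS) mulr0 subr0 ltr_pwDl //.
by apply: sumr_ge0 => S' _; apply: term_ge0.
Qed.

Lemma support_subset_node_basis (s1 : {set V} -> R) b S :
  mixed b s1 -> 0 < s1 S -> S \subset node_basis s1.
Proof.
case=> s1_ge0 _ _ s1S; apply/subsetP => i iS; rewrite inE.
by rewrite (bigD1 S) //= ltr_pwDl // sumr_ge0.
Qed.

Lemma detection_prob_outside_node_basis b (s1 : {set V} -> R) e :
  mixed b s1 -> e \notin CS C (node_basis s1) -> detection_prob s1 e = 0.
Proof.
move=> mixed_s1 e_out; have [s1_ge0 _ _] := mixed_s1.
apply: big1 => S _; have [->|nzS] := eqVneq (s1 S) 0; first by rewrite mul0r.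
have s1S : 0 < s1 S by rewrite lt0r nzS s1_ge0.
have /subsetP sub := CS_subset C (support_subset_node_basis mixed_s1 s1S).
by case: (boolP (e \in CS C S)) => [/sub eS|]; [rewrite eS in e_out | rewrite mulr0].
Qed.

Lemma node_basis_point_mass b (s1 : {set V} -> R) A :
  mixed b s1 -> s1 A = 1 -> node_basis s1 \subset A.
Proof.
move=> mixed_s1 s1A; apply/subsetP => i; rewrite inE; apply: contraTT => iNA.
rewrite big1 ?ltxx // => S iS; apply: (mixed_point_mass mixed_s1 s1A).
by apply: contraNneq iNA => <-.
Qed.

Lemma exists_support_avoiding b (s2 : {set E} -> R) e :
  mixed b s2 -> attack_prob s2 e != 1 -> exists2 T : {set E}, 0 < s2 T & e \notin T.
Proof.
case=> s2_ge0 s2_sum1 _ not_sure; apply/exists_inP; apply: contraNT not_sure.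
move=> /exists_inPn no_avoid; apply/eqP; rewrite -s2_sum1; apply: eq_bigr => T _.
have [->|nzT] := eqVneq (s2 T) 0; first by rewrite mul0r.
case: (boolP (e \in T)) => [_|eNT]; first by rewrite mulr1.
by move: (no_avoid T); rewrite unfold_in lt0r nzT s2_ge0 eNT => /(_ isT).
Qed.

End Payoffs.

Section Equilibrium.
Local Open Scope ring_scope.
Variables (R : realFieldType) (V E : finType) (C : V -> {set E}).
Hypothesis cover_all : forall e : E, exists i : V, e \in C i.
Variables (b1 b2 : nat).
Hypotheses (b1_gt0 : (0 < b1)%N) (b2_gt0 : (0 < b2)%N).
Hypotheses (b1_lt_n_star : (b1 < n_star C)%N) (b2_lt_m_star : (b2 < m_star C)%N).
Variables (s1 : {set V} -> R) (s2 : {set E} -> R).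
Hypothesis nash_s : nash C b1 b2 s1 s2.

Implicit Types (S : {set V}) (T : {set E}).

Local Notation u1 := (U1 C s1 s2).
Local Notation u2 := (U2 C s1 s2).

Let mixed_s1 : mixed b1 s1. Proof. by case: nash_s. Qed.
Let mixed_s2 : mixed b2 s2. Proof. by case: nash_s. Qed.

Let best_s1 (t1 : {set V} -> R) : mixed b1 t1 ->
  \sum_S t1 S * coverage_value C s2 S <= \sum_S s1 S * coverage_value C s2 S.
Proof. by rewrite -!U1E; case: nash_s => _ _ best1 _; apply: best1. Qed.

Let best_s2 (t2 : {set E} -> R) : mixed b2 t2 ->
  \sum_T t2 T * attack_value C s1 T <= \sum_T s2 T * attack_value C s1 T.
Proof. by rewrite -!(U2E _ _ mixed_s1); case: nash_s => _ _ _ best2; apply: best2. Qed.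

Lemma coverage_value_le_U1 S : (#|S| <= b1)%N -> coverage_value C s2 S <= u1.
Proof. by rewrite U1E; apply: best_response_pure_le best_s1 S. Qed.

Lemma coverage_value_support_max S S' :
  0 < s1 S -> (#|S'| <= b1)%N -> coverage_value C s2 S' <= coverage_value C s2 S.
Proof. exact: (best_response_support_max mixed_s1 best_s1). Qed.

Lemma attack_value_le_U2 T : (#|T| <= b2)%N -> attack_value C s1 T <= u2.
Proof. by rewrite (U2E _ _ mixed_s1); apply: best_response_pure_le best_s2 T. Qed.

Lemma attack_value_support_max T T' :
  0 < s2 T -> (#|T'| <= b2)%N -> attack_value C s1 T' <= attack_value C s1 T.
Proof. exact: (best_response_support_max mixed_s2 best_s2). Qed.

Lemma U1_add_U2_le : u1 + u2 <= b2%:R.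
Proof.
rewrite (U1_add_U2 _ _ mixed_s1); apply: (mixed_sum_le mixed_s2) => T s2T.
by rewrite ler_nat (mixed_support_card mixed_s2 s2T).
Qed.

(* Against a packing [Q] of size [b2 + 1], dropping any one element is a feasible
   attack; averaging these attacks bounds [u2] from below. *)
Lemma U1_lt_b1 : u1 < b1%:R.
Proof.
rewrite ltNge; apply/negP => le_b1_u1.
have [Q packQ cardQ] := exists_packing_card b2_lt_m_star.
set SQ := \sum_(e in Q) detection_prob C s1 e.
have le_SQ_b1 : SQ <= b1%:R := sum_detection_prob_packing_le mixed_s1 packQ.
have drop_one e : e \in Q -> b2%:R - SQ + detection_prob C s1 e <= u2.
  move=> eQ; have cardQe : #|Q :\ e| = b2.
    by have := cardsD1 e Q; rewrite eQ cardQ; lia.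
  apply: le_trans (attack_value_le_U2 (eq_leq cardQe)).
  by rewrite /attack_value cardQe /SQ (big_setD1 e eQ) opprD addrA addrAC subrK.
have split_sum : \sum_(e in Q) (b2%:R - SQ + detection_prob C s1 e) =
                  (b2%:R - SQ) *+ b2.+1 + SQ by rewrite big_split sumr_const cardQ.
have : \sum_(e in Q) (b2%:R - SQ + detection_prob C s1 e) <= \sum_(e in Q) u2.
  exact: ler_sum.
rewrite split_sum sumr_const cardQ -(mulr_natr (_ - _)) -(mulr_natr u2) -addn1 natrD.
have le_u2 : u2 <= b2%:R - b1%:R by have := U1_add_U2_le; lra.
have : u2 * (b2%:R + 1) <= (b2%:R - b1%:R) * (b2%:R + 1).
  by rewrite ler_wpM2r // addr_ge0 ?ler0n.
have : SQ * b2%:R <= b1%:R * b2%:R by rewrite ler_wpM2r ?ler0n.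
have : 0 < b1%:R :> R by rewrite ltr0n.
lra.
Qed.

Lemma support_not_cover S : 0 < s1 S -> exists e, e \notin CS C S.
Proof.
move=> s1S; apply/not_set_coverP; apply: contraTN b1_lt_n_star => coverS.
by rewrite -leqNgt (leq_trans (n_star_le coverS)) // (mixed_support_card mixed_s1 s1S).
Qed.

(* Attacking a single element missed by some defended set has positive value. *)
Lemma U2_gt0 : 0 < u2.
Proof.
have [S s1S] := mixed_exists_support mixed_s1; have [e eS] := support_not_cover s1S.
have := attack_value_le_U2 (T := [set e]); rewrite cards1 => /(_ b2_gt0).
rewrite /attack_value big_set1 cards1; apply: lt_le_trans.
by rewrite subr_gt0 (detection_prob_lt1 mixed_s1 s1S eS).
Qed.

Section UncoveredElement.
Variable e0 : E.
Hypothesis e0_uncovered : e0 \notin CS C (node_basis s1).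

Let detect_e0 : detection_prob C s1 e0 = 0.
Proof. exact: detection_prob_outside_node_basis mixed_s1 e0_uncovered. Qed.

Let e0_uncovered_support S : 0 < s1 S -> e0 \notin CS C S.
Proof.
move=> s1S; apply: contra e0_uncovered; apply/subsetP.
exact/CS_subset/(support_subset_node_basis mixed_s1 s1S).
Qed.

(* If [e0] is always attacked, swapping any node of a defended set for a node
   watching [e0] gains one unit, so the set's value is at least its size [b1]. *)
Lemma uncovered_not_always_attacked : attack_prob s2 e0 != 1.
Proof.
apply/eqP => attacked; have [i0 e0i0] := cover_all e0.
have gain S : e0 \notin CS C S ->
    coverage_value C s2 S + 1 <= coverage_value C s2 (i0 |: S).
  move=> e0S; rewrite -attacked; apply: (coverage_value_gain mixed_s2) e0S _.
    exact/CS_subset/subsetUr.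
  exact: mem_CS (setU11 _ _) e0i0.
have card_add S : (#|S| < b1)%N -> (#|i0 |: S| <= b1)%N.
  by rewrite cardsU1; case: (i0 \in S) => /=; lia.
have value_ge S : 0 < s1 S -> b1%:R <= coverage_value C s2 S.
  move=> s1S; have e0S := e0_uncovered_support s1S.
  have cardS := mixed_support_card mixed_s1 s1S.
  have [ltS|geS] := ltnP #|S| b1.
    by have := coverage_value_support_max s1S (card_add _ ltS); have := gain S e0S; lra.
  have swap j : j \in S -> 1 <= coverage_value C s2 S - coverage_value C s2 (S :\ j).
    move=> jS; have e0Sj : e0 \notin CS C (S :\ j).
      by apply: contra e0S; apply/subsetP/CS_subset/subsetDl.
    have ltSj : (#|S :\ j| < b1)%N by have := cardsD1 j S; rewrite jS; lia.
    have := coverage_value_support_max s1S (card_add _ ltSj).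
    by have := gain _ e0Sj; lra.
  apply: le_trans (sum_coverage_value_marginal_le C S mixed_s2).
  have <- : #|S| = b1 by apply/eqP; rewrite eqn_leq cardS.
  by rewrite -sum1_card natr_sum ler_sum.
have := U1_lt_b1; rewrite U1E ltNge => /negP; apply.
exact: mixed_sum_ge mixed_s1 value_ge.
Qed.

(* An attack [T] avoiding [e0] must be full and meet only undetected elements,
   since adding or swapping in [e0] would gain; then [u2 = b2] while [u1 > 0]. *)
Lemma uncovered_always_attacked : attack_prob s2 e0 = 1.
Proof.
apply/eqP; apply: contraT => /(exists_support_avoiding mixed_s2)[T s2T e0T].
have cardT : #|T| = b2.
  apply/eqP; rewrite eqn_leq (mixed_support_card mixed_s2 s2T) leqNgt.
  apply/negP => ltT.
  have := attack_value_support_max s2T (T' := e0 |: T).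
  by rewrite attack_value_setU1 // detect_e0 cardsU1 e0T => /(_ ltT); lra.
have undetected g : g \in T -> detection_prob C s1 g = 0.
  move=> gT; apply/eqP; rewrite eq_le (detection_prob_ge0 _ _ mixed_s1) andbT.
  have e0Tg : e0 \notin T :\ g by rewrite inE negb_and e0T orbT.
  have := attack_value_support_max s2T (T' := e0 |: (T :\ g)).
  rewrite attack_value_setU1 // attack_value_setD1 // detect_e0 cardsU1 e0Tg.
  by have := cardsD1 g T; rewrite gT cardT => cardTg /(_ ltac:(lia)); lra.
have u2_ge : b2%:R <= u2.
  apply: le_trans (attack_value_le_U2 (eq_leq cardT)).
  by rewrite /attack_value big1 // cardT subr0.
have [f fT] : exists f, f \in T by apply/card_gt0P; rewrite cardT.
have [i fi] := cover_all f.
have u1_gt0 : 0 < u1.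
  apply: lt_le_trans (coverage_value_le_U1 (S := [set i]) _); last by rewrite cards1.
  apply: coverage_value_gt0 mixed_s2 s2T _; rewrite card_gt0; apply/set0Pn.
  by exists f; rewrite inE fT andbT (mem_CS (set11 i)).
by have := U1_add_U2_le; lra.
Qed.

End UncoveredElement.

Lemma node_basis_cover : is_set_cover C (node_basis s1).
Proof.
apply/negPn/negP => /not_set_coverP[e0 e0_uncovered].
by have /eqP := uncovered_not_always_attacked e0_uncovered;
   apply; apply: uncovered_always_attacked.
Qed.

Lemma defender_not_point_mass : ~ point_mass s1.
Proof.
case=> A s1A; have s1A_gt0 : 0 < s1 A by rewrite s1A ltr01.
have coverA : is_set_cover C A.
  exact: is_set_coverS (node_basis_point_mass mixed_s1 s1A) node_basis_cover.
have := leq_trans (n_star_le coverA) (mixed_support_card mixed_s1 s1A_gt0).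
by rewrite leqNgt b1_lt_n_star.
Qed.

(* Against a known attack [T], a greedy defence detects [min b1 |T|] elements:
   either [u1 >= b1] or the attacker gets nothing. *)
Lemma attacker_not_point_mass : ~ point_mass s2.
Proof.
case=> T s2T; have [S cardS detS] := exists_greedy_cover T b1 cover_all.
have le_u1 : (Fdet C S T)%:R <= u1.
  apply: le_trans (coverage_value_le_U1 cardS).
  by rewrite /coverage_value (sum_point_mass _ mixed_s2 s2T).
have sum_u : u1 + u2 = #|T|%:R.
  by rewrite (U1_add_U2 _ _ mixed_s1) (sum_point_mass _ mixed_s2 s2T).
case: (leqP b1 #|T|) => [le_b1T|ltTb1].
  have := U1_lt_b1; rewrite ltNge => /negP; apply; apply: le_trans le_u1.
  by rewrite ler_nat; move: detS; rewrite (minn_idPl le_b1T).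
have := U2_gt0; have : #|T|%:R <= (Fdet C S T)%:R :> R.
  by rewrite ler_nat; move: detS; rewrite (minn_idPr (ltnW ltTb1)).
lra.
Qed.

End Equilibrium.

Theorem proposition3 (R : realFieldType) (V E : finType) (C : V -> {set E})
  (hV : (0 < #|V|)%N) (hE : (0 < #|E|)%N)
  (hcov : forall e : E, exists i : V, e \in C i)
  (b1 b2 : nat) (hb1 : (0 < b1)%N) (hb2 : (0 < b2)%N)
  (hn : (b1 < n_star C)%N) (hm : (b2 < m_star C)%N)
  (s1 : {set V} -> R) (s2 : {set E} -> R) :
  nash C b1 b2 s1 s2 ->
  [/\ is_set_cover C (node_basis s1), ~ point_mass s1 & ~ point_mass s2].
Proof.
move=> nash_s; split.
- exact: (node_basis_cover hcov hb1 hb2 hn hm nash_s).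
- exact: (defender_not_point_mass hcov hb1 hb2 hn hm nash_s).
- exact: (attacker_not_point_mass hcov hb1 hb2 hn hm nash_s).
Qed.
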